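(* For Lebesgue almost every $y\in[0,1]$, the fibre $K_y:=\{x\in\mathbb{R}:(x,y)\in K\}$ contains a nontrivial interval.
   Context: For $k\ge 0$ and $n\ge 1$ let $t_{k,n}:=\frac{1}{2^k n}$. Define the similarities of $\mathbb{R}^2$: $U(x,y)=\left(\frac{x}{2},\frac{y+1}{2}\right)$, $D_0(x,y)=\left(\frac{x}{2},\frac{y}{2}\right)$, and $D_{k,n}(x,y)=\left(\frac{x+t_{k,n}}{2},\frac{y}{2}\right)$ for $k\ge0,n\ge1$. $K$ is the unique non-empty compact set $K\subset\mathbb{R}^2$ satisfying $K=U(K)\cup D_0(K)\cup\bigcup_{k\ge0,n\ge1}D_{k,n}(K)$. *)

From Stdlib Require Import Reals List.
Open Scope R_scope.

Definition pt := (R * R)%type.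

Definition in_ball (c : pt) (r : R) (p : pt) : Prop :=
  (fst p - fst c)^2 + (snd p - snd c)^2 < r^2.

Definition open2 (U : pt -> Prop) : Prop :=
  forall p, U p -> exists r, 0 < r /\ forall q, in_ball p r q -> U q.

Definition compact2 (K : pt -> Prop) : Prop :=
  forall (I : Type) (U : I -> pt -> Prop),
    (forall i, open2 (U i)) ->
    (forall p, K p -> exists i, U i p) ->
    exists l : list I, forall p, K p -> exists i, In i l /\ U i p.

Definition t (k n : nat) : R := 1 / (2 ^ k * INR n).

Definition Umap (p : pt) : pt := (fst p / 2, (snd p + 1) / 2).
Definition D0 (p : pt) : pt := (fst p / 2, snd p / 2).
Definition Dkn (k n : nat) (p : pt) : pt := ((fst p + t k n) / 2, snd p / 2).

Definition is_attractor (K : pt -> Prop) : Prop :=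
  forall p, K p <->
    ((exists q, K q /\ p = Umap q) \/
     (exists q, K q /\ p = D0 q) \/
     (exists k n, (1 <= n)%nat /\ exists q, K q /\ p = Dkn k n q)).

Definition lebesgue_null (N : R -> Prop) : Prop :=
  forall eps, 0 < eps ->
    exists a b : nat -> R,
      (forall i, a i <= b i) /\
      (forall y, N y -> exists i, a i <= y <= b i) /\
      (forall m, sum_f_R0 (fun i => b i - a i) m <= eps).

(* Write y = 0.d_0 d_1 d_2 ... in binary.  Applying U along the digits 1 and
   D0 or D_{0,m} along the digits 0 reaches, up to 2^-N, the points
   (sum_j c_j 2^-(j+1), y) of K, where c_j = 0 if d_j = 1 and
   c_j is 0 or some 1/m if d_j = 0.  Suppose that for every j >= J some digit
   at a position in (j, (3j+1)/2] is 0.  Then every x in [0, 4^-(z+1)], z the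
   first zero digit from J on, can be approximated greedily: a remainder
   r <= 4^-(N+1) at a zero digit N is cut by a suitable unit fraction
   2^-(N+1)/m down to at most r^2 2^(N+1) <= 4^-(z'+1), z' the next zero
   digit.  K is closed, so this interval lies in the fibre.  The
   remaining y have, for infinitely many L, ones at the positions L, ...,
   L + L/2 - 1; at a fixed L these y lie in 2^L intervals of length
   2^-(L + L/2), and sum_L 2^-(L/2) converges (Borel-Cantelli). *)

From Stdlib Require Import Reals Lia Lra List ZArith Classical.
Open Scope R_scope.

Lemma half_pow_pos n : 0 < (1/2)^n.
Proof. apply pow_lt; lra. Qed.

Lemma half_pow_le m n : (m <= n)%nat -> (1/2)^n <= (1/2)^m.
Proof.
  intros Hmn. replace n with (m + (n - m))%nat by lia. rewrite pow_add.
  pose proof (half_pow_pos m) as Hm.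
  pose proof (pow_incr (1/2) 1 (n - m) ltac:(lra)) as Hle. rewrite pow1 in Hle.
  nra.
Qed.

Lemma two_pow_half_pow n : 2^n * (1/2)^n = 1.
Proof. rewrite <- Rpow_mult_distr. replace (2 * (1/2)) with 1 by field. apply pow1. Qed.

Lemma half_pow_small eps : 0 < eps -> exists N, forall n, (N <= n)%nat -> (1/2)^n < eps.
Proof.
  intros Heps. destruct (pow_lt_1_zero (1/2)) with (y := eps) as [N HN];
    [rewrite Rabs_pos_eq; lra | exact Heps |].
  exists N. intros n Hn. specialize (HN n Hn).
  rewrite Rabs_pos_eq in HN; [exact HN | left; apply half_pow_pos].
Qed.

Definition dist1 (p q : pt) : R := Rabs (fst p - fst q) + Rabs (snd p - snd q).

Lemma dist1_sym p q : dist1 p q = dist1 q p.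
Proof. unfold dist1. rewrite (Rabs_minus_sym (fst p)), (Rabs_minus_sym (snd p)). reflexivity. Qed.

Lemma dist1_triangle p q r : dist1 p r <= dist1 p q + dist1 q r.
Proof.
  unfold dist1.
  replace (fst p - fst r) with ((fst p - fst q) + (fst q - fst r)) by ring.
  replace (snd p - snd r) with ((snd p - snd q) + (snd q - snd r)) by ring.
  pose proof (Rabs_triang (fst p - fst q) (fst q - fst r)).
  pose proof (Rabs_triang (snd p - snd q) (snd q - snd r)).
  lra.
Qed.

Lemma dist1_pos p q : p <> q -> 0 < dist1 p q.
Proof.
  intros Hpq. destruct p as [p1 p2], q as [q1 q2]. unfold dist1; simpl.
  pose proof (Rabs_pos (p1 - q1)). pose proof (Rabs_pos (p2 - q2)).
  destruct (Req_dec p1 q1) as [E1|E1]; [destruct (Req_dec p2 q2) as [E2|E2] |].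
  - subst. contradiction.
  - pose proof (Rabs_pos_lt (p2 - q2) ltac:(lra)). lra.
  - pose proof (Rabs_pos_lt (p1 - q1) ltac:(lra)). lra.
Qed.

Lemma Rabs_lt_of_sq_lt a r : 0 < r -> a * a < r * r -> Rabs a < r.
Proof. intros Hr H. unfold Rabs; destruct Rcase_abs; nra. Qed.

Lemma in_ball_dist1 c r p : 0 < r -> in_ball c r p -> dist1 p c < 2 * r.
Proof.
  unfold in_ball, dist1. intros Hr H.
  pose proof (pow2_ge_0 (fst p - fst c)). pose proof (pow2_ge_0 (snd p - snd c)).
  assert (Rabs (fst p - fst c) < r) by (apply Rabs_lt_of_sq_lt; [exact Hr | simpl in *; lra]).
  assert (Rabs (snd p - snd c) < r) by (apply Rabs_lt_of_sq_lt; [exact Hr | simpl in *; lra]).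
  lra.
Qed.

Lemma open2_dist1_gt p e : open2 (fun q => e < dist1 q p).
Proof.
  intros q Hq; cbv beta in *. exists ((dist1 q p - e) / 2). split; [lra |].
  intros z Hz; cbv beta. pose proof (in_ball_dist1 q ((dist1 q p - e) / 2) z ltac:(lra) Hz).
  pose proof (dist1_triangle q z p). rewrite (dist1_sym q z) in *. lra.
Qed.

Lemma compact2_closed K p : compact2 K ->
  (forall eps, 0 < eps -> exists q, K q /\ dist1 q p < eps) -> K p.
Proof.
  intros HK Happrox. apply NNPP. intros Hp.
  destruct (HK nat (fun n q => (1/2)^n < dist1 q p)) as [l Hl].
  - intros n. apply open2_dist1_gt.
  - intros q Hq.
    assert (Hqp : 0 < dist1 q p) by (apply dist1_pos; intros ->; contradiction).
    destruct (half_pow_small _ Hqp) as [n Hn]. exists n. apply Hn. lia.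
  - destruct (Happrox _ (half_pow_pos (list_max l))) as [q [Hq Hqp]].
    destruct (Hl q Hq) as [i [Hi Hiq]].
    assert (Hmax : (i <= list_max l)%nat).
    { assert (Hall : Forall (fun k => (k <= list_max l)%nat) l) by (apply list_max_le; lia).
      rewrite Forall_forall in Hall. exact (Hall i Hi). }
    pose proof (half_pow_le _ _ Hmax). lra.
Qed.

(* The maps U, D0 and D_{0,m} are exactly the maps q |-> ((x + c)/2, (y + d)/2)
   for the pairs (c, d) below. *)
Definition ifs_branch (c d : R) : Prop :=
  (c = 0 /\ d = 1) \/ (c = 0 /\ d = 0) \/ (d = 0 /\ exists m, (1 <= m)%nat /\ c = t 0 m).

Lemma attractor_branch K c d q : is_attractor K -> ifs_branch c d -> K q ->
  K ((fst q + c) / 2, (snd q + d) / 2).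
Proof.
  intros HK Hcd Hq. apply HK.
  destruct Hcd as [[-> ->] | [[-> ->] | [-> [m [Hm ->]]]]].
  - left. exists q. split; [exact Hq |]. unfold Umap. f_equal; lra.
  - right; left. exists q. split; [exact Hq |]. unfold D0. f_equal; lra.
  - right; right. exists 0%nat, m. split; [exact Hm |].
    exists q. split; [exact Hq |]. unfold Dkn. f_equal; lra.
Qed.

Fixpoint dyadic_sum (c : nat -> R) (N : nat) : R :=
  match N with
  | O => 0
  | S n => dyadic_sum c n + c n * (1/2)^(S n)
  end.

Lemma dyadic_sum_zero N : dyadic_sum (fun _ => 0) N = 0.
Proof. induction N as [|N IH]; simpl; [reflexivity | rewrite IH; ring]. Qed.

Lemma dyadic_sum_ext c c' N : (forall j, (j < N)%nat -> c j = c' j) ->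
  dyadic_sum c N = dyadic_sum c' N.
Proof.
  induction N as [|N IH]; intros H; simpl; [reflexivity |].
  rewrite IH by (intros; apply H; lia). rewrite H by lia. reflexivity.
Qed.

Lemma attractor_dyadic_sum K c d N q : is_attractor K -> K q ->
  (forall j, (j < N)%nat -> ifs_branch (c j) (d j)) ->
  K (dyadic_sum c N + fst q * (1/2)^N, dyadic_sum d N + snd q * (1/2)^N).
Proof.
  intros HK. revert q. induction N as [|N IH]; intros q Hq Hcd.
  - destruct q as [q1 q2]. simpl. replace (0 + q1 * 1) with q1 by ring.
    replace (0 + q2 * 1) with q2 by ring. exact Hq.
  - set (q' := ((fst q + c N) / 2, (snd q + d N) / 2)).
    assert (Hq' : K q') by (apply attractor_branch; auto).
    specialize (IH q' Hq' ltac:(intros; apply Hcd; lia)).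
    match goal with |- K ?p => replace p with
      (dyadic_sum c N + fst q' * (1/2)^N, dyadic_sum d N + snd q' * (1/2)^N) end;
      [exact IH | simpl; f_equal; field].
Qed.

Definition bfloor (y : R) (n : nat) : Z := Int_part (2^n * y).

Definition bdigit (y : R) (n : nat) : R := IZR (bfloor y (S n)) - 2 * IZR (bfloor y n).

Lemma bfloor_spec y n : IZR (bfloor y n) <= 2^n * y < IZR (bfloor y n) + 1.
Proof. unfold bfloor. destruct (base_Int_part (2^n * y)). lra. Qed.

Lemma bfloor_scaled y n :
  IZR (bfloor y n) * (1/2)^n <= y < IZR (bfloor y n) * (1/2)^n + (1/2)^n.
Proof.
  pose proof (bfloor_spec y n) as [Hlo Hhi]. pose proof (half_pow_pos n) as Hh.
  pose proof (two_pow_half_pow n) as E.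
  assert (Ey : 2^n * y * (1/2)^n = y)
    by (replace (2^n * y * (1/2)^n) with (y * (2^n * (1/2)^n)) by ring; rewrite E; ring).
  split; nra.
Qed.

Lemma bfloor_nonneg y n : 0 <= y -> (0 <= bfloor y n)%Z.
Proof.
  intros Hy. pose proof (bfloor_spec y n) as [_ Hhi].
  assert (0 <= 2^n * y) by (apply Rmult_le_pos; [apply pow_le |]; lra).
  assert (Hgt : (-1 < bfloor y n)%Z) by (apply lt_IZR; lra).
  lia.
Qed.

Lemma bdigit_01 y n : bdigit y n = 0 \/ bdigit y n = 1.
Proof.
  pose proof (bfloor_spec y n). pose proof (bfloor_spec y (S n)).
  replace (2 ^ S n * y) with (2 * (2^n * y)) in * by (simpl; ring).
  unfold bdigit. rewrite <- mult_IZR, <- minus_IZR.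
  assert (Hlo : (-1 < bfloor y (S n) - 2 * bfloor y n)%Z)
    by (apply lt_IZR; rewrite minus_IZR, mult_IZR; lra).
  assert (Hhi : (bfloor y (S n) - 2 * bfloor y n < 2)%Z)
    by (apply lt_IZR; rewrite minus_IZR, mult_IZR; lra).
  assert (H01 : (bfloor y (S n) - 2 * bfloor y n = 0 \/ bfloor y (S n) - 2 * bfloor y n = 1)%Z)
    by lia.
  destruct H01 as [-> | ->]; [left | right]; reflexivity.
Qed.

Lemma dyadic_sum_bdigit y N : 0 <= y < 1 ->
  dyadic_sum (bdigit y) N = IZR (bfloor y N) * (1/2)^N.
Proof.
  intros Hy. induction N as [|N IH].
  - pose proof (bfloor_spec y 0) as Hb. simpl in Hb |- *.
    assert (E : bfloor y 0 = 0%Z)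
      by (assert (-1 < bfloor y 0 < 1)%Z by (split; apply lt_IZR; lra); lia).
    rewrite E. ring.
  - simpl dyadic_sum. rewrite IH. unfold bdigit. simpl. field.
Qed.

Lemma bfloor_ones_run y L h : (forall i, (i < h)%nat -> bdigit y (L + i) = 1) ->
  IZR (bfloor y (L + h)) = 2^h * (IZR (bfloor y L) + 1) - 1.
Proof.
  induction h as [|h IH]; intros Hones.
  - rewrite Nat.add_0_r. simpl. ring.
  - pose proof (Hones h ltac:(lia)) as Hd. unfold bdigit in Hd.
    rewrite IH in Hd by (intros; apply Hones; lia).
    rewrite Nat.add_succ_r. simpl. lra.
Qed.

Lemma unit_fraction_step r s : 0 < r -> 0 < s ->
  exists m, (1 <= m)%nat /\ 0 <= r - s * t 0 m <= r * r / s.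
Proof.
  intros Hr Hs. destruct (archimed (s / r)) as [Hup1 Hup2].
  set (M := up (s / r)) in *.
  assert (Hsr : 0 < s / r) by (apply Rdiv_lt_0_compat; lra).
  assert (HM : (1 <= M)%Z) by (apply Z.lt_pred_le, lt_IZR; rewrite <- Z.sub_1_r, minus_IZR; lra).
  exists (Z.to_nat M). split; [lia |].
  unfold t. rewrite INR_IZR_INZ, Z2Nat.id by lia. simpl pow.
  assert (Hlo : s < IZR M * r)
    by (apply (Rmult_lt_compat_r r) in Hup1; [| lra]; field_simplify in Hup1; lra).
  assert (Hhi : (IZR M - 1) * r <= s)
    by (apply (Rmult_le_compat_r r) in Hup2; [| lra]; field_simplify in Hup2; lra).
  assert (HMpos : 0 < IZR M) by nra.
  replace (r - s * (1 / (1 * IZR M))) with ((IZR M * r - s) / IZR M) by (field; lra).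
  split.
  - apply Rmult_le_pos; [lra | left; apply Rinv_0_lt_compat; lra].
  - apply Rmult_le_reg_r with (IZR M * s); [nra |].
    field_simplify; [nra | lra | lra].
Qed.

Lemma greedy_step s e e' r : 0 < s -> 0 <= e' -> e * e <= s * e' -> 0 <= r <= e ->
  exists c, (c = 0 \/ exists m, (1 <= m)%nat /\ c = t 0 m) /\ 0 <= r - s * c <= e'.
Proof.
  intros Hs He' Hee Hr.
  destruct (Rle_lt_dec r e') as [Hle | Hlt].
  - exists 0. split; [left; reflexivity | lra].
  - destruct (unit_fraction_step r s ltac:(lra) Hs) as [m [Hm Hrm]].
    exists (t 0 m). split; [right; exists m; auto |].
    assert (r * r / s <= e') by (apply Rmult_le_reg_r with s; [lra |]; field_simplify; nra).
    lra.
Qed.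

Definition short_runs_from (y : R) (J : nat) : Prop :=
  forall j, (J <= j)%nat ->
    exists z, (j < z)%nat /\ (2 * z <= 3 * j + 1)%nat /\ bdigit y z = 0.

Definition first_zero_from (y : R) (N z : nat) : Prop :=
  (N <= z)%nat /\ bdigit y z = 0 /\ forall j, (N <= j < z)%nat -> bdigit y j = 1.

Lemma first_zero_from_unique y N z z' :
  first_zero_from y N z -> first_zero_from y N z' -> z = z'.
Proof.
  intros [Hz [Hz0 Hz1]] [Hz' [Hz'0 Hz'1]].
  destruct (Nat.lt_trichotomy z z') as [H | [H | H]]; [| exact H |].
  - specialize (Hz'1 z ltac:(lia)). lra.
  - specialize (Hz1 z' ltac:(lia)). lra.
Qed.

Lemma first_zero_from_exists y N z : (N <= z)%nat -> bdigit y z = 0 ->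
  exists z0, first_zero_from y N z0.
Proof.
  induction z as [z IH] using (well_founded_induction lt_wf). intros Hz Hd.
  destruct (classic (exists j, (N <= j < z)%nat /\ bdigit y j = 0)) as [[j [Hj Hdj]] | Hnone].
  - apply (IH j ltac:(lia)); [lia | exact Hdj].
  - exists z. repeat split; [exact Hz | exact Hd |].
    intros j Hj. destruct (bdigit_01 y j) as [E | E]; [| exact E].
    exfalso. apply Hnone. exists j. auto.
Qed.

Definition greedy_radius (z : nat) : R := (1/2)^(2 * z + 2).

Definition branches_along (y : R) (c : nat -> R) (N : nat) : Prop :=
  forall j, (j < N)%nat -> ifs_branch (c j) (bdigit y j).

Definition extend (c : nat -> R) (N : nat) (v : R) : nat -> R :=
  fun j => if Nat.eqb j N then v else c j.

Lemma dyadic_sum_extend c N v :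
  dyadic_sum (extend c N v) (S N) = dyadic_sum c N + v * (1/2)^(S N).
Proof.
  simpl. unfold extend at 2. rewrite Nat.eqb_refl.
  rewrite (dyadic_sum_ext _ c); [reflexivity |].
  intros j Hj. unfold extend. destruct (Nat.eqb_spec j N); [lia | reflexivity].
Qed.

Lemma branches_along_extend y c N v : branches_along y c N ->
  ifs_branch v (bdigit y N) -> branches_along y (extend c N v) (S N).
Proof.
  intros Hc Hv j Hj. unfold extend. destruct (Nat.eqb_spec j N) as [-> | Hne].
  - exact Hv.
  - apply Hc. lia.
Qed.

Lemma greedy_zero_digit y x c N z : bdigit y N = 0 -> (2 * z <= 3 * N + 1)%nat ->
  branches_along y c N -> 0 <= x - dyadic_sum c N <= greedy_radius N ->
  exists c', branches_along y c' (S N) /\ 0 <= x - dyadic_sum c' (S N) <= greedy_radius z.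
Proof.
  intros Hd Hz Hc Hr.
  destruct (greedy_step ((1/2)^(S N)) (greedy_radius N) (greedy_radius z) (x - dyadic_sum c N))
    as [v [Hv Hvr]]; [apply half_pow_pos | left; apply half_pow_pos | | exact Hr |].
  - unfold greedy_radius. rewrite <- !pow_add. apply half_pow_le. lia.
  - exists (extend c N v). split.
    + apply branches_along_extend; [exact Hc |]. rewrite Hd.
      destruct Hv as [-> | Hm]; unfold ifs_branch; auto.
    + rewrite dyadic_sum_extend. lra.
Qed.

Lemma greedy_approximation y J z0 x :
  short_runs_from y J -> first_zero_from y J z0 -> 0 <= x <= greedy_radius z0 ->
  forall N z, (J <= N)%nat -> first_zero_from y N z ->
  exists c, branches_along y c N /\ 0 <= x - dyadic_sum c N <= greedy_radius z.
Proof.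
  intros Hruns Hz0 Hx N z HN. revert z. induction HN as [| N HN IH]; intros z Hz.
  - rewrite (first_zero_from_unique _ _ _ _ Hz Hz0).
    exists (fun _ => 0). split; [| rewrite dyadic_sum_zero; lra].
    intros j _. unfold ifs_branch. destruct (bdigit_01 y j) as [-> | ->]; auto.
  - destruct (bdigit_01 y N) as [Hd | Hd].
    + destruct (IH N ltac:(split; [lia | split; [exact Hd | intros; lia]])) as [c [Hc Hr]].
      destruct (Hruns N HN) as [w [Hw [Hw2 Hw0]]].
      assert (Hzw : (z <= w)%nat).
      { destruct Hz as [_ [_ Hz1]]. destruct (le_lt_dec z w) as [Hle | Hlt]; [exact Hle |].
        specialize (Hz1 w ltac:(lia)). lra. }
      apply (greedy_zero_digit y x c N z Hd ltac:(lia) Hc Hr).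
    + assert (HzN : first_zero_from y N z).
      { destruct Hz as [Hz [Hz0' Hz1]]. repeat split; [lia | exact Hz0' |].
        intros j Hj. destruct (Nat.eq_dec j N) as [-> | Hne]; [exact Hd | apply Hz1; lia]. }
      destruct (IH z HzN) as [c [Hc Hr]].
      exists (extend c N 0). split.
      * apply branches_along_extend; [exact Hc |]. rewrite Hd. left; auto.
      * rewrite dyadic_sum_extend. lra.
Qed.

Lemma dyadic_point_dist1 c d N q x y :
  0 <= x - dyadic_sum c N <= (1/2)^N -> 0 <= y - dyadic_sum d N <= (1/2)^N ->
  dist1 (dyadic_sum c N + fst q * (1/2)^N, dyadic_sum d N + snd q * (1/2)^N) (x, y)
    <= (2 + Rabs (fst q) + Rabs (snd q)) * (1/2)^N.
Proof.
  intros Hx Hy. unfold dist1; simpl. pose proof (half_pow_pos N) as Hh.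
  pose proof (Rabs_triang (fst q * (1/2)^N) (- (x - dyadic_sum c N))) as Tx.
  pose proof (Rabs_triang (snd q * (1/2)^N) (- (y - dyadic_sum d N))) as Ty.
  rewrite Rabs_Ropp, Rabs_mult, (Rabs_pos_eq ((1/2)^N)), (Rabs_pos_eq (x - _)) in Tx by lra.
  rewrite Rabs_Ropp, Rabs_mult, (Rabs_pos_eq ((1/2)^N)), (Rabs_pos_eq (y - _)) in Ty by lra.
  replace (dyadic_sum c N + fst q * (1/2)^N - x)
    with (fst q * (1/2)^N + - (x - dyadic_sum c N)) by ring.
  replace (dyadic_sum d N + snd q * (1/2)^N - y)
    with (snd q * (1/2)^N + - (y - dyadic_sum d N)) by ring.
  lra.
Qed.

Lemma fibre_contains_interval K y J : (exists p, K p) -> compact2 K -> is_attractor K ->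
  0 <= y < 1 -> short_runs_from y J ->
  exists a b, a < b /\ forall x, a <= x <= b -> K (x, y).
Proof.
  intros [p HKp] HKc HKa Hy Hruns.
  destruct (Hruns J (le_n J)) as [w [Hw [_ Hw0]]].
  destruct (first_zero_from_exists y J w ltac:(lia) Hw0) as [z0 Hz0].
  exists 0, (greedy_radius z0). split; [apply half_pow_pos |].
  intros x Hx. apply compact2_closed; [exact HKc |]. intros eps Heps.
  set (C := 2 + Rabs (fst p) + Rabs (snd p)).
  assert (HC : 0 < C)
    by (unfold C; pose proof (Rabs_pos (fst p)); pose proof (Rabs_pos (snd p)); lra).
  destruct (half_pow_small (eps / C)) as [N0 HN0]; [apply Rdiv_lt_0_compat; lra |].
  set (N := Nat.max J N0).
  destruct (Hruns N ltac:(lia)) as [v [Hv [_ Hv0]]].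
  destruct (first_zero_from_exists y N v ltac:(lia) Hv0) as [z Hz].
  destruct (greedy_approximation y J z0 x Hruns Hz0 Hx N z ltac:(lia) Hz) as [c [Hc Hr]].
  eexists; split; [exact (attractor_dyadic_sum K c (bdigit y) N p HKa HKp Hc) |].
  apply Rle_lt_trans with (C * (1/2)^N).
  - apply dyadic_point_dist1.
    + assert (greedy_radius z <= (1/2)^N) by (apply half_pow_le; destruct Hz; lia). lra.
    + rewrite dyadic_sum_bdigit by exact Hy. pose proof (bfloor_scaled y N). lra.
  - replace eps with (C * (eps / C)) by (field; lra).
    apply Rmult_lt_compat_l; [lra | apply HN0; lia].
Qed.

Fixpoint sum_below (f : nat -> R) (M : nat) : R :=
  match M with
  | O => 0
  | S k => sum_below f k + f k
  end.

Lemma sum_f_R0_sum_below f P : sum_f_R0 f P = sum_below f (S P).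
Proof. induction P as [|P IH]; simpl; [ring | rewrite IH; reflexivity]. Qed.

Lemma sum_below_const_block f a n v : (forall i, (i < n)%nat -> f (a + i)%nat = v) ->
  sum_below f (a + n) = sum_below f a + INR n * v.
Proof.
  induction n as [|n IH]; intros Hf.
  - rewrite Nat.add_0_r. simpl. ring.
  - rewrite Nat.add_succ_r. simpl sum_below. rewrite IH by (intros; apply Hf; lia).
    rewrite Hf by lia. rewrite S_INR. ring.
Qed.

Lemma sum_below_le f a b : (forall n, 0 <= f n) -> (a <= b)%nat ->
  sum_below f a <= sum_below f b.
Proof.
  intros Hf Hab. induction Hab as [| b Hab IH]; [lra |]. simpl. pose proof (Hf b). lra.
Qed.

Definition level_len (Kp L : nat) : R :=
  if Nat.ltb L (2 * Kp) then 0 else (1/2)^(L + Nat.div2 L).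

(* Index n = 2^L + m (m < 2^L) stands for the y whose first L binary digits
   spell m and whose next L/2 digits are all 1; index 0 covers y = 1, and the
   levels L < 2 Kp are left empty. *)
Definition cover_len (Kp n : nat) : R :=
  if Nat.eqb n 0 then 0 else level_len Kp (Nat.log2 n).

Definition cover_left (Kp n : nat) : R :=
  if Nat.eqb n 0 then 1 else
  let L := Nat.log2 n in
  if Nat.ltb L (2 * Kp) then 0
  else (2^(Nat.div2 L) * (INR (n - 2^L) + 1) - 1) * (1/2)^(L + Nat.div2 L).

Definition cover_right (Kp n : nat) : R := cover_left Kp n + cover_len Kp n.

Lemma cover_len_nonneg Kp n : 0 <= cover_len Kp n.
Proof.
  unfold cover_len, level_len.
  destruct (Nat.eqb n 0); [lra |]. destruct Nat.ltb; [lra | left; apply half_pow_pos].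
Qed.

Lemma cover_len_level Kp L i : (i < 2^L)%nat -> cover_len Kp (2^L + i) = level_len Kp L.
Proof.
  intros Hi. unfold cover_len. destruct (Nat.eqb_spec (2^L + i) 0).
  - pose proof (Nat.pow_nonzero 2 L). lia.
  - rewrite (Nat.log2_unique' _ L i) by lia. reflexivity.
Qed.

(* The sum of (1/2)^(l'/2) over l' >= l. *)
Definition level_tail (l : nat) : R :=
  2 * (1/2)^(Nat.div2 l) + 2 * (1/2)^(Nat.div2 (S l)).

Lemma sum_cover_len_pow2 Kp L :
  sum_below (cover_len Kp) (2^L) + level_tail (Nat.max L (2 * Kp)) <= 4 * (1/2)^Kp.
Proof.
  induction L as [|L IH].
  - replace (Nat.max 0 (2 * Kp)) with (2 * Kp)%nat by lia.
    unfold level_tail. rewrite Nat.div2_double.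
    replace (S (2 * Kp)) with (2 * Kp + 1)%nat by lia. rewrite Nat.div2_odd'.
    unfold cover_len. simpl. lra.
  - rewrite Nat.pow_succ_r'. replace (2 * 2^L)%nat with (2^L + 2^L)%nat by lia.
    rewrite (sum_below_const_block _ _ _ (level_len Kp L)) by (intros; apply cover_len_level; lia).
    rewrite pow_INR. unfold level_len in *.
    destruct (Nat.ltb_spec L (2 * Kp)).
    + replace (Nat.max (S L) (2 * Kp)) with (Nat.max L (2 * Kp)) by lia. lra.
    + replace (Nat.max (S L) (2 * Kp)) with (S L) by lia.
      replace (Nat.max L (2 * Kp)) with L in IH by lia.
      unfold level_tail in *. change (Nat.div2 (S (S L))) with (S (Nat.div2 L)).
      rewrite pow_add, <- Rmult_assoc, two_pow_half_pow. simpl in *. lra.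
Qed.

Lemma sum_cover_len_le Kp P : sum_f_R0 (cover_len Kp) P <= 4 * (1/2)^Kp.
Proof.
  rewrite sum_f_R0_sum_below.
  assert (HP : (S P <= 2^(S P))%nat) by (apply Nat.lt_le_incl, Nat.pow_gt_lin_r; lia).
  pose proof (sum_below_le _ _ _ (cover_len_nonneg Kp) HP).
  pose proof (sum_cover_len_pow2 Kp (S P)).
  assert (0 <= level_tail (Nat.max (S P) (2 * Kp)))
    by (unfold level_tail; pose proof (half_pow_pos (Nat.div2 (Nat.max (S P) (2 * Kp))));
        pose proof (half_pow_pos (Nat.div2 (S (Nat.max (S P) (2 * Kp))))); lra).
  lra.
Qed.

Lemma long_run_of_not_short_runs y J : ~ short_runs_from y J ->
  exists L, (J < L)%nat /\ forall i, (i < Nat.div2 L)%nat -> bdigit y (L + i) = 1.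
Proof.
  intros Hns. apply not_all_ex_not in Hns as [j Hj]. apply imply_to_and in Hj as [HJj Hnone].
  exists (S j). split; [lia |]. intros i Hi.
  destruct (bdigit_01 y (S j + i)) as [E | E]; [| exact E].
  exfalso. apply Hnone. exists (S j + i)%nat. repeat split; [lia | | exact E].
  pose proof (Nat.div2_odd (S j)) as Hdiv. destruct (Nat.odd (S j)); cbn [Nat.b2n] in Hdiv; lia.
Qed.

Lemma cover_long_run Kp y L : 0 <= y < 1 -> (2 * Kp <= L)%nat ->
  (forall i, (i < Nat.div2 L)%nat -> bdigit y (L + i) = 1) ->
  exists n, cover_left Kp n <= y <= cover_right Kp n.
Proof.
  intros Hy HL Hones. set (h := Nat.div2 L) in *.
  pose proof (bfloor_nonneg y L ltac:(lra)) as Hnn.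
  set (m := Z.to_nat (bfloor y L)).
  assert (Hm : INR m = IZR (bfloor y L)) by (unfold m; rewrite INR_IZR_INZ, Z2Nat.id; auto).
  assert (HmL : (m < 2^L)%nat).
  { apply INR_lt. rewrite pow_INR, Hm. change (INR 2) with 2.
    pose proof (bfloor_spec y L). pose proof (pow_lt 2 L ltac:(lra)). nra. }
  exists (2^L + m)%nat.
  assert (Hlog : Nat.log2 (2^L + m) = L) by (apply (Nat.log2_unique' _ _ m); lia).
  unfold cover_right, cover_left, cover_len, level_len.
  rewrite (proj2 (Nat.eqb_neq _ 0)) by (pose proof (Nat.pow_nonzero 2 L); lia).
  rewrite Hlog, (proj2 (Nat.ltb_ge _ _)) by lia. fold h. cbv zeta.
  replace (2^L + m - 2^L)%nat with m by lia.
  rewrite Hm, <- (bfloor_ones_run y L h Hones).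
  pose proof (bfloor_scaled y (L + h)). lra.
Qed.

Lemma long_runs_null :
  lebesgue_null (fun y => y = 1 \/ (0 <= y < 1 /\ ~ exists J, short_runs_from y J)).
Proof.
  intros eps Heps.
  destruct (half_pow_small (eps / 4)) as [Kp HKp]; [lra |].
  exists (cover_left Kp), (cover_right Kp). split; [| split].
  - intros n. unfold cover_right. pose proof (cover_len_nonneg Kp n). lra.
  - intros y [-> | [Hy Hbad]].
    + exists 0%nat. unfold cover_right, cover_left, cover_len. simpl. lra.
    + assert (Hns : ~ short_runs_from y (2 * Kp)) by (intros Hs; apply Hbad; eauto).
      destruct (long_run_of_not_short_runs y _ Hns) as [L [HL Hones]].
      apply (cover_long_run Kp y L Hy ltac:(lia) Hones).
  - intros m.
    rewrite (sum_eq _ (cover_len Kp)) by (intros; unfold cover_right; ring).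
    pose proof (sum_cover_len_le Kp m). specialize (HKp Kp (le_n Kp)). lra.
Qed.

Theorem proposition2p5 :
  forall K : pt -> Prop,
    (exists p, K p) -> compact2 K -> is_attractor K ->
    exists N : R -> Prop, lebesgue_null N /\
      forall y, 0 <= y <= 1 -> ~ N y ->
        exists a b, a < b /\ forall x, a <= x <= b -> K (x, y).
Proof.
  intros K HK HKc HKa.
  exists (fun y => y = 1 \/ (0 <= y < 1 /\ ~ exists J, short_runs_from y J)).
  split; [exact long_runs_null |].
  intros y Hy Hgood.
  assert (Hy1 : 0 <= y < 1) by (destruct (Req_dec y 1); [tauto | lra]).
  destruct (classic (exists J, short_runs_from y J)) as [[J HJ] | Hbad].
  - exact (fibre_contains_interval K y J HK HKc HKa Hy1 HJ).
  - exfalso. apply Hgood. right. auto.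
Qed.
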